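(* Let $d\ge1$, let $H$ be a hypergraph of $d$-intervals and let $w$ be a weight system on $H$. Then $\tau_w(H)\le 2d^2\,\nu_w(H)$.
   Context: A $d$-interval is a union of at most $d$ pairwise disjoint closed intervals of the real line $\mathbb{R}$. A hypergraph of $d$-intervals is a finite family $H$ of $d$-intervals, regarded as a hypergraph whose vertices are the points of $\mathbb{R}$ and whose edges are the members of $H$. A matching is a set of pairwise disjoint edges. A weight system on $H$ is a function $w:H\to\mathbb{N}$. $\nu_w(H)$ is the maximum of $\sum_{h\in M}w(h)$ over all matchings $M$. A $w$-cover is a finitely supported function $g:\mathbb{R}\to\mathbb{N}$ with $\sum_{v\in h}g(v)\ge w(h)$ for every $h\in H$; $\tau_w(H)$ is the minimum of $\sum_v g(v)$ over all $w$-covers. *)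

From Stdlib Require Import Reals List.
Import ListNotations.
Open Scope R_scope.

Definition interval := (R * R)%type.

Definition in_interval (v : R) (I : interval) : Prop := fst I <= v <= snd I.

Definition in_intervalb (v : R) (I : interval) : bool :=
  if Rle_dec (fst I) v then (if Rle_dec v (snd I) then true else false) else false.

(* A d-interval is given by the list of its (closed, nonempty, pairwise
   disjoint) component intervals; it has between 1 and d components. *)
Definition dinterval := list interval.

Definition in_dint (v : R) (h : dinterval) : Prop :=
  exists I, In I h /\ in_interval v I.

Definition in_dintb (v : R) (h : dinterval) : bool :=
  existsb (in_intervalb v) h.

Definition is_dinterval (d : nat) (h : dinterval) : Prop :=
  (1 <= length h)%nat /\ (length h <= d)%nat /\
  (forall I, In I h -> fst I <= snd I) /\
  (forall i j, (i < length h)%nat -> (j < length h)%nat -> i <> j ->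
     forall v, ~ (in_interval v (nth i h (0,0)) /\ in_interval v (nth j h (0,0)))).

(* Hypergraph: a finite family H 0, ..., H (n-1) of d-intervals;
   weight system w : index -> nat. *)

Definition dint_disjoint (h1 h2 : dinterval) : Prop :=
  forall v, ~ (in_dint v h1 /\ in_dint v h2).

Definition is_matching (n : nat) (H : nat -> dinterval) (M : list nat) : Prop :=
  NoDup M /\ (forall i, In i M -> (i < n)%nat) /\
  (forall i j, In i M -> In j M -> i <> j -> dint_disjoint (H i) (H j)).

Definition mweight (w : nat -> nat) (M : list nat) : nat := list_sum (map w M).

Definition is_nu_w (n : nat) (H : nat -> dinterval) (w : nat -> nat) (k : nat) : Prop :=
  (exists M, is_matching n H M /\ mweight w M = k) /\
  (forall M, is_matching n H M -> (mweight w M <= k)%nat).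

Definition supported_in (g : R -> nat) (S : list R) : Prop :=
  NoDup S /\ forall v, ~ In v S -> g v = 0%nat.

Definition gsum_on (g : R -> nat) (S : list R) (h : dinterval) : nat :=
  list_sum (map g (filter (fun v => in_dintb v h) S)).

Definition gtotal (g : R -> nat) (S : list R) : nat := list_sum (map g S).

Definition is_w_cover (n : nat) (H : nat -> dinterval) (w : nat -> nat)
    (g : R -> nat) (S : list R) : Prop :=
  supported_in g S /\ forall i, (i < n)%nat -> (w i <= gsum_on g S (H i))%nat.

Definition is_tau_w (n : nat) (H : nat -> dinterval) (w : nat -> nat) (t : nat) : Prop :=
  (exists g S, is_w_cover n H w g S /\ gtotal g S = t) /\
  (forall g S, is_w_cover n H w g S -> (t <= gtotal g S)%nat).

(* Let P be the finite set of right endpoints of the components of the edges.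
   The proof has three stages.
   1. Local ratio.  If y >= 0 is an edge weighting whose load
      sum_{k : b in H k} y_k is at most 1 at every point b of P, then some
      matching M satisfies sum_h w_h y_h <= 2d w(M).  The key estimate is an
      averaging argument: two intersecting d-intervals always contain a right
      endpoint of one another, so a y-average edge meets edges of total
      y-weight at most 2d.
   2. Fractional cover (LP duality).  By Farkas' lemma (proved by
      Fourier-Motzkin elimination), either there is x >= 0 on P covering every
      edge h with mass w_h and of total mass at most 2d nu_w(H), or there is a
      dual certificate, which after normalisation is a weighting y as in 1
      with sum_h w_h y_h > 2d nu_w(H), contradicting stage 1.
   3. Rounding.  A fractional cover of total mass T yields an integral cover of
      total at most dT: put one unit at each "1/d-quantile" of x.  Every edge
      has a component carrying mass at least w_h / d, which then contains at
      least w_h quantiles.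
   Together tau_w(H) <= d * 2d nu_w(H). *)

From Stdlib Require Import Reals List.
From Stdlib Require Import Lra Lia Classical ClassicalEpsilon.
Import ListNotations.
Open Scope R_scope.

(** * Finite sums and indicators *)

Fixpoint rsum (n : nat) (f : nat -> R) : R :=
  match n with O => 0 | S k => rsum k f + f k end.

Lemma rsum_ext n f g : (forall i, (i < n)%nat -> f i = g i) -> rsum n f = rsum n g.
Proof.
  induction n; simpl; intros H; auto.
  rewrite IHn by (intros; apply H; lia). rewrite H by lia. reflexivity.
Qed.

Lemma rsum_le n f g : (forall i, (i < n)%nat -> f i <= g i) -> rsum n f <= rsum n g.
Proof.
  induction n; simpl; intros H; [lra|].
  assert (rsum n f <= rsum n g) by (apply IHn; intros; apply H; lia).
  assert (f n <= g n) by (apply H; lia). lra.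
Qed.

Lemma rsum_lt n f g : (forall i, (i < n)%nat -> f i <= g i) ->
  (exists i, (i < n)%nat /\ f i < g i) -> rsum n f < rsum n g.
Proof.
  induction n; simpl; intros H [i [Hi Hlt]]; [lia|].
  assert (f n <= g n) by (apply H; lia).
  destruct (Nat.eq_dec i n) as [->|Hne].
  - assert (rsum n f <= rsum n g) by (apply rsum_le; intros; apply H; lia). lra.
  - assert (rsum n f < rsum n g) by (apply IHn; [intros; apply H; lia | exists i; split; [lia|auto]]).
    lra.
Qed.

Lemma rsum_plus n f g : rsum n (fun i => f i + g i) = rsum n f + rsum n g.
Proof. induction n; simpl; [lra|]. rewrite IHn. lra. Qed.

Lemma rsum_scal n c f : rsum n (fun i => c * f i) = c * rsum n f.
Proof. induction n; simpl; [lra|]. rewrite IHn. lra. Qed.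

Lemma rsum_opp n f : rsum n (fun i => - f i) = - rsum n f.
Proof. induction n; simpl; [lra|]. rewrite IHn. lra. Qed.

Lemma rsum_zero n : rsum n (fun _ => 0) = 0.
Proof. induction n; simpl; [lra|]. rewrite IHn. lra. Qed.

Lemma rsum_nonneg n f : (forall i, (i < n)%nat -> 0 <= f i) -> 0 <= rsum n f.
Proof. intros H. rewrite <- (rsum_zero n). apply rsum_le; auto. Qed.

Lemma rsum_term n f i : (forall i, (i < n)%nat -> 0 <= f i) -> (i < n)%nat -> f i <= rsum n f.
Proof.
  induction n; simpl; intros H Hi; [lia|].
  assert (0 <= f n) by (apply H; lia).
  destruct (Nat.eq_dec i n) as [->|Hne].
  - assert (0 <= rsum n f) by (apply rsum_nonneg; intros; apply H; lia). lra.
  - assert (f i <= rsum n f) by (apply IHn; [intros; apply H; lia | lia]). lra.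
Qed.

Lemma rsum_swap n m f :
  rsum n (fun i => rsum m (fun j => f i j)) = rsum m (fun j => rsum n (fun i => f i j)).
Proof.
  induction n; simpl.
  - rewrite rsum_zero. reflexivity.
  - rewrite IHn, <- rsum_plus. reflexivity.
Qed.

Lemma rsum_unit N j f : (j < N)%nat -> rsum N (fun k => if Nat.eqb k j then f k else 0) = f j.
Proof.
  induction N; intros Hj; [lia|]. simpl. destruct (Nat.eq_dec j N) as [->|Hne].
  - rewrite Nat.eqb_refl, (rsum_ext _ _ (fun _ => 0)), rsum_zero; [lra|].
    intros i Hi. destruct (Nat.eqb_spec i N); [lia|auto].
  - rewrite IHN by lia. destruct (Nat.eqb_spec N j); [lia|lra].
Qed.

Definition ind (P : Prop) : R := if excluded_middle_informative P then 1 else 0.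

Lemma ind_nonneg P : 0 <= ind P.
Proof. unfold ind; destruct excluded_middle_informative; lra. Qed.

Lemma ind_le1 P : ind P <= 1.
Proof. unfold ind; destruct excluded_middle_informative; lra. Qed.

Lemma ind_true (P : Prop) : P -> ind P = 1.
Proof. unfold ind; destruct excluded_middle_informative; tauto. Qed.

Lemma ind_false (P : Prop) : ~ P -> ind P = 0.
Proof. unfold ind; destruct excluded_middle_informative; tauto. Qed.

Lemma ind_mono (P Q : Prop) : (P -> Q) -> ind P <= ind Q.
Proof. intros H; unfold ind; do 2 destruct excluded_middle_informative; try lra; tauto. Qed.

Definition lsumR {A} (l : list A) (f : A -> R) : R := fold_right (fun a acc => f a + acc) 0 l.

Lemma lsumR_le {A} (l : list A) f g : (forall a, In a l -> f a <= g a) -> lsumR l f <= lsumR l g.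
Proof.
  induction l; simpl; intros H; [lra|].
  assert (f a <= g a) by auto. assert (lsumR l f <= lsumR l g) by auto. lra.
Qed.

Lemma lsumR_nonneg {A} (l : list A) f : (forall a, In a l -> 0 <= f a) -> 0 <= lsumR l f.
Proof.
  induction l; simpl; intros Hf; [lra|].
  assert (0 <= f a) by auto. assert (0 <= lsumR l f) by auto. lra.
Qed.

Lemma lsumR_const {A} (l : list A) c : lsumR l (fun _ => c) = INR (length l) * c.
Proof. induction l; simpl lsumR; simpl length; [simpl; lra|]. rewrite IHl, S_INR. lra. Qed.

Lemma lsumR_rsum {A} (l : list A) n f :
  rsum n (fun i => lsumR l (fun a => f a i)) = lsumR l (fun a => rsum n (fun i => f a i)).
Proof.
  induction l; simpl.
  - apply rsum_zero.
  - rewrite rsum_plus, IHl. reflexivity.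
Qed.

Lemma lsumR_scal {A} (l : list A) c f : lsumR l (fun a => c * f a) = c * lsumR l f.
Proof. induction l; simpl; [lra|]. rewrite IHl; lra. Qed.

Lemma lsumR_scal_r {A} (l : list A) (f : A -> R) c : lsumR l (fun a => f a * c) = lsumR l f * c.
Proof. induction l; simpl; [lra|]. rewrite IHl; lra. Qed.

Lemma ind_exists_le {A} (l : list A) (Q : A -> Prop) :
  ind (exists a, In a l /\ Q a) <= lsumR l (fun a => ind (Q a)).
Proof.
  induction l as [|a l IHl]; simpl.
  - rewrite ind_false; [lra|]. intros [a [[] _]].
  - destruct (classic (Q a)) as [Hq|Hq].
    + rewrite (ind_true (Q a) Hq).
      assert (0 <= lsumR l (fun a => ind (Q a))) by (apply lsumR_nonneg; intros; apply ind_nonneg).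
      pose proof (ind_le1 (exists b, (a = b \/ In b l) /\ Q b)). lra.
    + rewrite (ind_false (Q a) Hq).
      assert (ind (exists b, (a = b \/ In b l) /\ Q b) <= ind (exists b, In b l /\ Q b)).
      { apply ind_mono. intros [b [[<-|Hb] Hqb]]; [tauto | eauto]. }
      lra.
Qed.

Lemma lsumR_lt_nonempty {A} (l : list A) f B : l <> [] -> (forall a, In a l -> f a < B) ->
  lsumR l f < INR (length l) * B.
Proof.
  induction l as [|a l IHl]; intros Hne H; [congruence|]. simpl lsumR. simpl length. rewrite S_INR.
  assert (f a < B) by (apply H; simpl; auto).
  destruct l as [|a' l'].
  - simpl. lra.
  - assert (lsumR (a' :: l') f < INR (length (a' :: l')) * B)
      by (apply IHl; [congruence | intros; apply H; simpl in *; tauto]).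
    lra.
Qed.

(** * Farkas' lemma by Fourier-Motzkin elimination *)

Definition row := ((nat -> R) * R)%type.
Definition rdot N (a x : nat -> R) := rsum N (fun j => a j * x j).
Definition sat N (x : nat -> R) (r : row) := rdot N (fst r) x <= snd r.

Inductive cone (sys : list row) : row -> Prop :=
| cone_nil : cone sys ((fun _ => 0), 0)
| cone_cons r a b c : In r sys -> 0 <= c -> cone sys (a, b) ->
    cone sys ((fun j => c * fst r j + a j), c * snd r + b)
| cone_ext a b a' b' : cone sys (a, b) -> (forall j, a j = a' j) -> b = b' -> cone sys (a', b').

Lemma cone_row sys r : In r sys -> cone sys r.
Proof.
  intros Hr. destruct r as [a b]. eapply cone_ext.
  - apply (cone_cons _ (a, b) _ _ 1 Hr ltac:(lra) (cone_nil _)).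
  - intros; simpl; lra.
  - simpl; lra.
Qed.

Lemma cone_add sys a1 b1 a2 b2 c : cone sys (a1, b1) -> cone sys (a2, b2) -> 0 <= c ->
  cone sys ((fun j => c * a1 j + a2 j), c * b1 + b2).
Proof.
  intros H1. remember (a1, b1) as r1. revert a1 b1 Heqr1.
  induction H1 as [|r a b c0 Hr Hc0 Hcone IH|a b a' b' Hcone IH Ea Eb];
    intros a1 b1 E H2 Hc; inversion E; subst; clear E.
  - eapply cone_ext; [exact H2| |]; intros; simpl; lra.
  - eapply cone_ext.
    + apply (cone_cons _ r (fun j => c * a j + a2 j) (c * b + b2) (c * c0)); [auto | nra |].
      apply (IH a b eq_refl H2 Hc).
    + intros j; simpl; lra.
    + lra.
  - eapply cone_ext; [apply (IH _ _ eq_refl H2 Hc) | |]; intros; simpl; try rewrite Ea; lra.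
Qed.

Lemma cone_mono sys sys' r : (forall r', In r' sys' -> cone sys r') -> cone sys' r -> cone sys r.
Proof.
  intros Hs H. induction H.
  - apply cone_nil.
  - destruct r as [ra rb]. apply cone_add; auto.
  - eapply cone_ext; eauto.
Qed.

Lemma cone_coef sys N r : (forall r', In r' sys -> fst r' N = 0) -> cone sys r -> fst r N = 0.
Proof.
  intros Hs Hc. induction Hc as [|r a b c Hr _ _ IH|a b a' b' _ IH Ea _]; simpl in *; auto.
  - rewrite (Hs r Hr), IH. lra.
  - rewrite <- Ea; auto.
Qed.

Lemma list_max {A} (l : list A) (f : A -> R) : l <> [] ->
  exists a, In a l /\ forall b, In b l -> f b <= f a.
Proof.
  induction l as [|a l IHl]; intros Hne; [congruence|]. destruct l as [|a0 l].
  - exists a; split; simpl; auto. intros b [->|[]]; lra.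
  - destruct IHl as [m [Hm Hmax]]; [congruence|].
    destruct (Rle_dec (f a) (f m)).
    + exists m; split; [simpl; auto|]. intros b [->|Hb]; auto.
    + exists a; split; [simpl; auto|]. intros b [->|Hb]; [lra|]. specialize (Hmax b Hb). lra.
Qed.

Lemma separation {A} (lp ln : list A) (U L : A -> R) :
  (forall p q, In p lp -> In q ln -> L q <= U p) ->
  exists t, (forall q, In q ln -> L q <= t) /\ (forall p, In p lp -> t <= U p).
Proof.
  intros H. destruct ln as [|q0 ln'].
  - destruct lp as [|p0 lp'].
    + exists 0; split; intros ? [].
    + destruct (list_max (p0 :: lp') (fun p => - U p)) as [m [Hm Hmax]]; [congruence|].
      exists (U m); split; [intros ? []|]. intros p Hp. specialize (Hmax p Hp). lra.
  - destruct (list_max (q0 :: ln') L) as [m [Hm Hmax]]; [congruence|].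
    exists (L m); split; [auto|]. intros p Hp; apply H; auto.
Qed.

Definition Zs N (sys : list row) := filter (fun r => if Req_EM_T (fst r N) 0 then true else false) sys.
Definition Ps N (sys : list row) := filter (fun r => if Rlt_dec 0 (fst r N) then true else false) sys.
Definition Ns N (sys : list row) := filter (fun r => if Rlt_dec (fst r N) 0 then true else false) sys.
Definition comb N (p q : row) : row :=
  ((fun j => (- fst q N) * fst p j + fst p N * fst q j), (- fst q N) * snd p + fst p N * snd q).
Definition elim N sys := Zs N sys ++ flat_map (fun p => map (comb N p) (Ns N sys)) (Ps N sys).

Lemma in_Zs N sys r : In r (Zs N sys) <-> In r sys /\ fst r N = 0.
Proof. unfold Zs; rewrite filter_In. destruct Req_EM_T; intuition congruence. Qed.
Lemma in_Ps N sys r : In r (Ps N sys) <-> In r sys /\ 0 < fst r N.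
Proof. unfold Ps; rewrite filter_In. destruct Rlt_dec; intuition congruence. Qed.
Lemma in_Ns N sys r : In r (Ns N sys) <-> In r sys /\ fst r N < 0.
Proof. unfold Ns; rewrite filter_In. destruct Rlt_dec; intuition congruence. Qed.

Lemma in_elim N sys r : In r (elim N sys) <->
  (In r sys /\ fst r N = 0) \/ exists p q, In p (Ps N sys) /\ In q (Ns N sys) /\ r = comb N p q.
Proof.
  unfold elim; rewrite in_app_iff, in_flat_map, in_Zs. split.
  - intros [Hr|[p [Hp Hq]]]; [now left|]. right.
    apply in_map_iff in Hq. destruct Hq as [q [<- Hq]]. exists p, q; auto.
  - intros [Hr|[p [q [Hp [Hq ->]]]]]; [now left|]. right. exists p; split; auto. apply in_map; auto.
Qed.

Lemma elim_coef N sys r : In r (elim N sys) -> fst r N = 0.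
Proof.
  intros H. apply in_elim in H as [[_ E]|[p [q [_ [_ ->]]]]]; auto. simpl. lra.
Qed.

Lemma elim_cone N sys r : In r (elim N sys) -> cone sys r.
Proof.
  intros H. apply in_elim in H as [[Hr _]|[p [q [Hp [Hq ->]]]]]; [now apply cone_row|].
  apply in_Ps in Hp as [Hp Hp']. apply in_Ns in Hq as [Hq Hq'].
  destruct p as [pa pb], q as [qa qb]. simpl in *. unfold comb; simpl.
  eapply cone_ext.
  - apply (cone_cons _ (pa, pb) (fun j => pa N * qa j + 0) (pa N * qb + 0) (- qa N) Hp ltac:(lra)).
    apply (cone_cons _ (qa, qb) _ _ (pa N) Hq ltac:(lra) (cone_nil _)).
  - intros; simpl; lra.
  - simpl; lra.
Qed.

Section Elimination.
Variable N : nat.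
Variable sys : list row.
Variable x : nat -> R.
Hypothesis Hx : forall r, In r (elim N sys) -> sat N x r.

(* Given x on the first N coordinates, row r bounds the N-th coordinate by
   [bnd r] (from above if its coefficient is positive, below if negative). *)
Let bnd (r : row) : R := (snd r - rdot N (fst r) x) / fst r N.

(* Each combined row says that a lower bound lies below an upper bound. *)
Lemma elim_bounds_ordered p q : In p (Ps N sys) -> In q (Ns N sys) -> bnd q <= bnd p.
Proof.
  intros Hp Hq.
  assert (Hc : In (comb N p q) (elim N sys)) by (apply in_elim; right; exists p, q; auto).
  specialize (Hx _ Hc). unfold sat in Hx.
  apply in_Ps in Hp as [_ Hp]. apply in_Ns in Hq as [_ Hq].
  assert (E : rdot N (fst (comb N p q)) x = (- fst q N) * rdot N (fst p) x + fst p N * rdot N (fst q) x).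
  { unfold rdot, comb; simpl. rewrite <- !rsum_scal, <- rsum_plus. apply rsum_ext; intros; lra. }
  rewrite E in Hx. simpl in Hx. unfold bnd.
  apply Rmult_le_reg_l with (fst p N * - fst q N); [nra|].
  replace (fst p N * - fst q N * ((snd q - rdot N (fst q) x) / fst q N))
    with (- fst p N * (snd q - rdot N (fst q) x)) by (field; lra).
  replace (fst p N * - fst q N * ((snd p - rdot N (fst p) x) / fst p N))
    with (- fst q N * (snd p - rdot N (fst p) x)) by (field; lra).
  lra.
Qed.

Lemma rdot_S a y : rdot (S N) a y = rdot N a y + a N * y N.
Proof. reflexivity. Qed.

Lemma elim_lift : exists x', forall r, In r sys -> sat (S N) x' r.
Proof.
  destruct (separation (Ps N sys) (Ns N sys) bnd bnd elim_bounds_ordered) as [t [HL HU]].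
  exists (fun j => if Nat.eqb j N then t else x j).
  intros r Hr. unfold sat. rewrite rdot_S, Nat.eqb_refl.
  assert (E : rdot N (fst r) (fun j => if Nat.eqb j N then t else x j) = rdot N (fst r) x).
  { apply rsum_ext. intros i Hi. destruct (Nat.eqb_spec i N); [lia|auto]. }
  rewrite E.
  destruct (Rtotal_order (fst r N) 0) as [Hneg|[Hz|Hpos]].
  - specialize (HL r (proj2 (in_Ns N sys r) (conj Hr Hneg))). unfold bnd in HL.
    apply Rmult_le_compat_neg_l with (r := fst r N) in HL; [|lra].
    replace (fst r N * ((snd r - rdot N (fst r) x) / fst r N)) with (snd r - rdot N (fst r) x)
      in HL by (field; lra).
    lra.
  - assert (Hz' : In r (elim N sys)) by (apply in_elim; left; auto).
    specialize (Hx r Hz'). unfold sat in Hx. rewrite Hz. lra.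
  - specialize (HU r (proj2 (in_Ps N sys r) (conj Hr Hpos))). unfold bnd in HU.
    apply Rmult_le_compat_l with (r := fst r N) in HU; [|lra].
    replace (fst r N * ((snd r - rdot N (fst r) x) / fst r N)) with (snd r - rdot N (fst r) x)
      in HU by (field; lra).
    lra.
Qed.
End Elimination.

Theorem farkas : forall N sys, (forall x, ~ (forall r, In r sys -> sat N x r)) ->
  exists a b, cone sys (a, b) /\ (forall j, (j < N)%nat -> a j = 0) /\ b < 0.
Proof.
  induction N as [|N IHN]; intros sys Hinf.
  - destruct (not_all_ex_not _ _ (Hinf (fun _ => 0))) as [r Hr].
    apply imply_to_and in Hr as [Hr Hns]. unfold sat, rdot in Hns; simpl in Hns.
    destruct r as [a b]. exists a, b. repeat split; [now apply cone_row | lia | simpl in Hns; lra].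
  - destruct (IHN (elim N sys)) as [a [b [Hc [Ha Hb]]]].
    { intros x Hx. destruct (elim_lift N sys x Hx) as [x' Hx']. exact (Hinf x' Hx'). }
    exists a, b. repeat split; auto.
    + apply (cone_mono _ (elim N sys)); auto. intros r Hr; apply (elim_cone N); auto.
    + intros j Hj. destruct (Nat.eq_dec j N) as [->|]; [|apply Ha; lia].
      apply (cone_coef (elim N sys) N (a, b)); auto. intros r Hr; apply (elim_coef N sys); auto.
Qed.

(** * Natural-number sums, extrema and counting *)

Fixpoint nsum (n : nat) (f : nat -> nat) : nat :=
  match n with O => O | S k => (nsum k f + f k)%nat end.

Lemma nsum_le n f g : (forall i, (i < n)%nat -> (f i <= g i)%nat) -> (nsum n f <= nsum n g)%nat.
Proof.
  induction n; simpl; intros Hfg; [lia|].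
  assert (f n <= g n)%nat by (apply Hfg; lia).
  assert (nsum n f <= nsum n g)%nat by (apply IHn; intros; apply Hfg; lia). lia.
Qed.

Lemma nsum_lt n f g h : (forall i, (i < n)%nat -> (f i <= g i)%nat) -> (h < n)%nat ->
  (f h < g h)%nat -> (nsum n f < nsum n g)%nat.
Proof.
  induction n; simpl; intros Hfg Hh Hlt; [lia|].
  assert (f n <= g n)%nat by (apply Hfg; lia).
  destruct (Nat.eq_dec h n) as [->|].
  - assert (nsum n f <= nsum n g)%nat by (apply nsum_le; intros; apply Hfg; lia). lia.
  - assert (nsum n f < nsum n g)%nat by (apply IHn; auto; try lia; intros; apply Hfg; lia). lia.
Qed.

Lemma list_sum_map_le {A} (f g : A -> nat) (l : list A) : (forall x, In x l -> (f x <= g x)%nat) ->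
  (list_sum (map f l) <= list_sum (map g l))%nat.
Proof.
  induction l as [|b l IH]; simpl; intros Hle; auto.
  assert (f b <= g b)%nat by (apply Hle; simpl; auto).
  assert (list_sum (map f l) <= list_sum (map g l))%nat by (apply IH; intros; apply Hle; simpl; auto).
  lia.
Qed.

Lemma list_sum_map_lt {A} (f g : A -> nat) (l : list A) a : (forall x, In x l -> (f x <= g x)%nat) ->
  In a l -> (f a < g a)%nat -> (list_sum (map f l) < list_sum (map g l))%nat.
Proof.
  induction l as [|b l IH]; simpl; intros Hle Ha Hlt; [tauto|].
  assert (list_sum (map f l) <= list_sum (map g l))%nat
    by (apply list_sum_map_le; intros; apply Hle; simpl; auto).
  assert (f b <= g b)%nat by (apply Hle; simpl; auto).
  destruct Ha as [->|Ha]; [lia|].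
  assert (list_sum (map f l) < list_sum (map g l))%nat
    by (apply IH; auto; intros; apply Hle; simpl; auto).
  lia.
Qed.

Lemma list_sum_le_nsum n (w : nat -> nat) (M : list nat) : NoDup M ->
  (forall i, In i M -> (i < n)%nat) -> (list_sum (map w M) <= nsum n w)%nat.
Proof.
  revert M. induction n as [|n IHn]; intros M Hnd Hlt.
  - destruct M as [|a M]; simpl; auto. specialize (Hlt a (or_introl eq_refl)). lia.
  - simpl. destruct (in_dec Nat.eq_dec n M) as [Hin|Hout].
    + destruct (in_split _ _ Hin) as [l1 [l2 ->]].
      apply NoDup_remove in Hnd as [Hnd Hn].
      rewrite map_app, list_sum_app. simpl.
      assert (Hrest : (list_sum (map w (l1 ++ l2)) <= nsum n w)%nat).
      { apply IHn; auto. intros i Hi. assert (i < S n)%nat by (apply Hlt; apply in_app_or in Hi;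
          apply in_or_app; simpl; tauto).
        destruct (Nat.eq_dec i n) as [->|]; [tauto|lia]. }
      rewrite map_app, list_sum_app in Hrest. lia.
    + assert (list_sum (map w M) <= nsum n w)%nat.
      { apply IHn; auto. intros i Hi. assert (i < S n)%nat by auto.
        destruct (Nat.eq_dec i n) as [->|]; [tauto|lia]. }
      lia.
Qed.

Lemma nat_max (P : nat -> Prop) B : (exists k, P k) -> (forall k, P k -> (k <= B)%nat) ->
  exists m, P m /\ forall k, P k -> (k <= m)%nat.
Proof.
  revert P. induction B; intros P [k Hk] HB.
  - exists k; split; auto. intros j Hj. pose proof (HB j Hj). pose proof (HB k Hk). lia.
  - destruct (classic (P (S B))) as [HS|HS].
    + exists (S B); split; auto.
    + apply IHB; [eauto|]. intros j Hj. specialize (HB j Hj).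
      destruct (Nat.eq_dec j (S B)); [subst; tauto|lia].
Qed.

Lemma nat_min (Q : nat -> Prop) : (exists i, Q i) -> exists m, Q m /\ forall k, Q k -> (m <= k)%nat.
Proof.
  intros [i Hi]. induction i as [i IH] using (well_founded_induction Wf_nat.lt_wf).
  destruct (classic (exists k, Q k /\ (k < i)%nat)) as [[k [Hk Hki]]|Hno].
  - exact (IH k Hki Hk).
  - exists i; split; auto. intros k Hk. destruct (Nat.le_gt_cases i k); auto.
    exfalso; apply Hno; eauto.
Qed.

Lemma nat_floor X : 0 <= X -> exists m, INR m <= X /\ forall k, INR k <= X -> (k <= m)%nat.
Proof.
  intros HX. destruct (INR_unbounded X) as [B HB].
  apply (nat_max (fun k => INR k <= X) B).
  - exists 0%nat; simpl; auto.
  - intros k Hk. assert (Hlt : INR k < INR B) by lra. apply INR_lt in Hlt. lia.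
Qed.

(* nu_w(H) exists: matching weights are bounded by the total weight. *)
Lemma nu_exists n H w : exists nu, is_nu_w n H w nu.
Proof.
  destruct (nat_max (fun k => exists M, is_matching n H M /\ mweight w M = k) (nsum n w))
    as [m [[M [HM E]] Hmax]].
  - exists 0%nat, []. split; [|reflexivity]. split; [constructor|]. split; intros i; simpl; tauto.
  - intros k [M [[Hnd [Hlt _]] <-]]. apply list_sum_le_nsum; auto.
  - exists m. split; [exists M; auto|]. intros M' HM'. apply Hmax. exists M'; auto.
Qed.

Lemma tau_exists n H w g S : is_w_cover n H w g S ->
  exists tau, is_tau_w n H w tau /\ (tau <= gtotal g S)%nat.
Proof.
  intros Hcov.
  destruct (nat_min (fun k => exists g S, is_w_cover n H w g S /\ gtotal g S = k))
    as [tau [Htau Hmin]]; [exists (gtotal g S), g, S; auto|].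
  exists tau. repeat split; auto.
  - intros g' S' Hc'. apply Hmin. exists g', S'; auto.
  - apply Hmin. exists g, S; auto.
Qed.

Lemma fin_argmin (Q : nat -> Prop) (f : nat -> R) N : (exists j, (j < N)%nat /\ Q j) ->
  exists j, (j < N)%nat /\ Q j /\ forall j', (j' < N)%nat -> Q j' -> f j <= f j'.
Proof.
  induction N; intros [j [Hj Hq]]; [lia|].
  destruct (classic (exists j, (j < N)%nat /\ Q j)) as [E|E].
  - destruct (IHN E) as [m [Hm [Hqm Hmin]]].
    destruct (classic (Q N /\ f N < f m)) as [[HqN Hlt]|Hn].
    + exists N; split; [lia|split; auto]. intros j' Hj' Hq'.
      destruct (Nat.eq_dec j' N) as [->|]; [lra|]. specialize (Hmin j' ltac:(lia) Hq'). lra.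
    + exists m; split; [lia|split; auto]. intros j' Hj' Hq'.
      destruct (Nat.eq_dec j' N) as [->|]; [|apply Hmin; auto; lia].
      destruct (Rle_dec (f m) (f N)); auto. exfalso; apply Hn; split; auto; lra.
  - exists N.
    assert (j = N) by (destruct (Nat.eq_dec j N); auto; exfalso; apply E; exists j; split; auto; lia).
    subst. split; [lia|split; auto]. intros j' Hj' Hq'. destruct (Nat.eq_dec j' N) as [->|]; [lra|].
    exfalso; apply E; exists j'; split; auto; lia.
Qed.

Lemma list_sum_map_add {A} (f g : A -> nat) (F : list A) :
  list_sum (map (fun v => f v + g v)%nat F) = (list_sum (map f F) + list_sum (map g F))%nat.
Proof. induction F; simpl; lia. Qed.

Lemma sum_indicator {A} (eq_dec : forall x y : A, {x = y} + {x <> y}) (a : A) (F : list A) :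
  list_sum (map (fun v => if eq_dec a v then 1 else 0)%nat F) = count_occ eq_dec F a.
Proof.
  induction F as [|v F IH]; simpl; auto. rewrite IH.
  destruct (eq_dec a v), (eq_dec v a); first [reflexivity | congruence].
Qed.

Lemma sum_count_occ {A} (eq_dec : forall x y : A, {x = y} + {x <> y}) (S l : list A) (p : A -> bool) :
  NoDup S -> incl l S ->
  list_sum (map (count_occ eq_dec l) (filter p S)) = length (filter p l).
Proof.
  intros HS. induction l as [|a l IH]; simpl; intros Hincl.
  - induction (filter p S); simpl; auto.
  - assert (Ha : In a S) by (apply Hincl; simpl; auto).
    rewrite (map_ext _ (fun v => (if eq_dec a v then 1 else 0) + count_occ eq_dec l v)%nat)
      by (intros v; destruct (eq_dec a v); reflexivity).
    rewrite list_sum_map_add, sum_indicator, IH by (intros v Hv; apply Hincl; simpl; auto).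
    assert (Hnd : NoDup (filter p S)) by (apply NoDup_filter; auto).
    destruct (p a) eqn:Ep.
    + rewrite (proj1 (NoDup_count_occ' eq_dec _) Hnd a) by (apply filter_In; auto). reflexivity.
    + rewrite (proj1 (count_occ_not_In eq_dec _ a)) by (rewrite filter_In; intuition congruence).
      reflexivity.
Qed.

(** * Local ratio: matchings from weightings of bounded load *)

Section LocalRatio.
Variables d n : nat.
Variable H : nat -> dinterval.
Hypothesis Hd : forall i, (i < n)%nat -> is_dinterval d (H i).

Definition meet i j := exists v, in_dint v (H i) /\ in_dint v (H j).

Definition reaches i j := exists b, In b (map snd (H i)) /\ in_dint b (H j).

Definition load_bounded (y : nat -> R) := forall i, (i < n)%nat -> forall b, In b (map snd (H i)) ->
  rsum n (fun k => ind (in_dint b (H k)) * y k) <= 1.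

(* Of two intersecting components, the one ending first ends inside the other. *)
Lemma meet_reaches i j : meet i j -> reaches i j \/ reaches j i.
Proof.
  intros [v [[I [HI vI]] [J [HJ vJ]]]]. unfold in_interval in *.
  destruct (Rle_dec (snd I) (snd J)).
  - left. exists (snd I); split; [apply in_map; auto|]. exists J; split; auto. unfold in_interval; lra.
  - right. exists (snd J); split; [apply in_map; auto|]. exists I; split; auto. unfold in_interval; lra.
Qed.

Lemma meet_self i : (i < n)%nat -> meet i i.
Proof.
  intros Hi. destruct (Hd i Hi) as [Hl [_ [Hc _]]].
  destruct (H i) as [|I l] eqn:E; simpl in Hl; [lia|].
  assert (fst I <= snd I) by (apply Hc; simpl; auto).
  exists (fst I). rewrite E. split; exists I; split; simpl; auto; unfold in_interval; lra.
Qed.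

Lemma ind_meet_le i j : ind (meet i j) <= ind (reaches i j) + ind (reaches j i).
Proof.
  pose proof (ind_nonneg (reaches i j)). pose proof (ind_nonneg (reaches j i)).
  destruct (classic (meet i j)) as [M|M]; [|rewrite (ind_false _ M); lra].
  rewrite (ind_true _ M). destruct (meet_reaches _ _ M) as [R1|R1]; rewrite (ind_true _ R1); lra.
Qed.

(* An edge has at most d right endpoints, each of load at most 1, so the
   edges it reaches have total weight at most d. *)
Lemma reaches_mass_le z h : (h < n)%nat -> (forall i, (i < n)%nat -> 0 <= z i) -> load_bounded z ->
  rsum n (fun i => ind (reaches h i) * z i) <= INR d.
Proof.
  intros Hh Hz HL.
  apply Rle_trans with (rsum n (fun i => lsumR (map snd (H h)) (fun b => ind (in_dint b (H i)) * z i))).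
  - apply rsum_le. intros i Hi. rewrite lsumR_scal_r. apply Rmult_le_compat_r; [auto|].
    apply ind_exists_le.
  - rewrite (lsumR_rsum (map snd (H h)) n (fun b i => ind (in_dint b (H i)) * z i)).
    apply Rle_trans with (lsumR (map snd (H h)) (fun _ => 1)).
    + apply lsumR_le. intros b Hb. apply (HL h Hh b Hb).
    + rewrite lsumR_const, length_map, Rmult_1_r. apply le_INR.
      destruct (Hd h Hh) as [_ [Hl _]]. auto.
Qed.

(* Averaging: sum_h z_h (z-weight of the edges meeting h) <= 2d sum_h z_h,
   counting each intersecting pair through a "reaches" relation. *)
Lemma meet_average z : (forall i, (i < n)%nat -> 0 <= z i) -> load_bounded z ->
  rsum n (fun h => z h * rsum n (fun i => ind (meet h i) * z i)) <= 2 * INR d * rsum n z.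
Proof.
  intros Hz HL.
  set (Reach := rsum n (fun h => z h * rsum n (fun i => ind (reaches h i) * z i))).
  apply Rle_trans with (Reach + rsum n (fun h => z h * rsum n (fun i => ind (reaches i h) * z i))).
  { unfold Reach. rewrite <- rsum_plus. apply rsum_le. intros h Hh.
    rewrite <- Rmult_plus_distr_l, <- rsum_plus. apply Rmult_le_compat_l; [auto|].
    apply rsum_le; intros i Hi. rewrite <- Rmult_plus_distr_r.
    apply Rmult_le_compat_r; [auto|]. apply ind_meet_le. }
  assert (Esym : rsum n (fun h => z h * rsum n (fun i => ind (reaches i h) * z i)) = Reach).
  { unfold Reach. transitivity (rsum n (fun h => rsum n (fun i => z h * (ind (reaches i h) * z i)))).
    { apply rsum_ext; intros; rewrite rsum_scal; auto. }
    rewrite rsum_swap. apply rsum_ext; intros i Hi. rewrite <- rsum_scal. apply rsum_ext; intros; ring. }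
  assert (Hreach : Reach <= rsum n (fun h => INR d * z h)).
  { apply rsum_le; intros h Hh. rewrite Rmult_comm. apply Rmult_le_compat_r; [auto|].
    apply reaches_mass_le; auto. }
  rewrite rsum_scal in Hreach. lra.
Qed.

Lemma light_edge_exists z : (forall i, (i < n)%nat -> 0 <= z i) -> load_bounded z ->
  (exists h, (h < n)%nat /\ z h <> 0) ->
  exists h, (h < n)%nat /\ 0 < z h /\ rsum n (fun i => ind (meet h i) * z i) <= 2 * INR d.
Proof.
  intros Hz HL [h0 [Hh0 Hzh0]]. apply NNPP; intros Hno.
  assert (Heavy : forall h, (h < n)%nat -> 0 < z h ->
                   2 * INR d < rsum n (fun i => ind (meet h i) * z i)).
  { intros h Hh Hp. apply Rnot_le_lt. intros Hle. apply Hno; eauto. }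
  assert (Hlt : rsum n (fun h => z h * (2 * INR d))
                < rsum n (fun h => z h * rsum n (fun i => ind (meet h i) * z i))).
  { apply rsum_lt.
    - intros h Hh. destruct (Rle_lt_or_eq_dec 0 (z h) (Hz h Hh)) as [Hp|Hp].
      + apply Rmult_le_compat_l; [lra|]. left; auto.
      + rewrite <- Hp; lra.
    - exists h0; split; auto. assert (0 < z h0) by (pose proof (Hz h0 Hh0); lra).
      apply Rmult_lt_compat_l; auto. }
  pose proof (meet_average z Hz HL).
  rewrite (rsum_ext _ _ (fun h => 2 * INR d * z h)), rsum_scal in Hlt by (intros; ring). lra.
Qed.

Definition restrict_pos (w : nat -> nat) (y : nat -> R) (i : nat) : R := ind (0 < w i)%nat * y i.

Lemma restrict_pos_nonneg w y : (forall i, (i < n)%nat -> 0 <= y i) ->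
  forall i, (i < n)%nat -> 0 <= restrict_pos w y i.
Proof. intros Hy i Hi. apply Rmult_le_pos; [apply ind_nonneg | auto]. Qed.

Lemma restrict_pos_load w y : (forall i, (i < n)%nat -> 0 <= y i) -> load_bounded y ->
  load_bounded (restrict_pos w y).
Proof.
  intros Hy HL i Hi b Hb. eapply Rle_trans; [|apply (HL i Hi b Hb)]. apply rsum_le; intros k Hk.
  apply Rmult_le_compat_l; [apply ind_nonneg|]. unfold restrict_pos.
  pose proof (ind_le1 (0 < w k)%nat). pose proof (ind_nonneg (0 < w k)%nat). pose proof (Hy k Hk). nra.
Qed.

Lemma restrict_pos_zero w y : (forall i, (i < n)%nat -> restrict_pos w y i = 0) ->
  rsum n (fun i => INR (w i) * y i) = 0.
Proof.
  intros Hz. rewrite (rsum_ext _ _ (fun _ => 0)), rsum_zero; auto.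
  intros i Hi. destruct (Nat.eq_dec (w i) 0) as [E|E]; [rewrite E; simpl; ring|].
  specialize (Hz i Hi). unfold restrict_pos in Hz. rewrite ind_true, Rmult_1_l in Hz by lia.
  rewrite Hz. ring.
Qed.

Definition lower (w : nat -> nat) (h i : nat) : nat :=
  if excluded_middle_informative ((0 < w i)%nat /\ meet h i) then (w i - 1)%nat else w i.

Lemma lower_split w y h :
  rsum n (fun i => INR (w i) * y i) =
  rsum n (fun i => INR (lower w h i) * y i) + rsum n (fun i => ind (meet h i) * restrict_pos w y i).
Proof.
  rewrite <- rsum_plus. apply rsum_ext; intros i Hi. unfold lower, restrict_pos.
  destruct excluded_middle_informative as [[Hp Hm]|Hq].
  - rewrite (ind_true _ Hm), (ind_true _ Hp), minus_INR by lia. simpl. ring.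
  - destruct (classic (meet h i)) as [Hm|Hm].
    + rewrite (ind_false (0 < w i)%nat) by tauto. ring.
    + rewrite (ind_false _ Hm). ring.
Qed.

Lemma lower_le w h i : (lower w h i <= w i)%nat.
Proof. unfold lower. destruct excluded_middle_informative; lia. Qed.

Lemma lower_matching_hit w h M2 i : In i M2 -> (0 < w i)%nat -> meet h i ->
  (mweight (lower w h) M2 + 1 <= mweight w M2)%nat.
Proof.
  intros HiM Hwi Hm. unfold mweight.
  enough (list_sum (map (lower w h) M2) < list_sum (map w M2))%nat by lia.
  apply list_sum_map_lt with i; auto.
  - intros j _. apply lower_le.
  - unfold lower. destruct excluded_middle_informative as [_|Hn]; [lia | tauto].
Qed.

(* Otherwise, dropping the edges meeting h (all of weight 0) and adding h
   gives a matching that gains w_h >= 1. *)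
Lemma lower_matching_add w h M2 : (h < n)%nat -> (0 < w h)%nat -> is_matching n H M2 ->
  ~ (exists i, In i M2 /\ (0 < w i)%nat /\ meet h i) ->
  exists M, is_matching n H M /\ (mweight (lower w h) M2 + 1 <= mweight w M)%nat.
Proof.
  intros Hh Hwh [Hnd [Hlt Hdisj]] Hno.
  set (far := fun i => if excluded_middle_informative (meet h i) then false else true).
  assert (Hfar : forall j, In j (filter far M2) <-> In j M2 /\ ~ meet h j).
  { intros j. rewrite filter_In. unfold far.
    destruct excluded_middle_informative; intuition congruence. }
  exists (h :: filter far M2). split; [split; [|split]|].
  - constructor; [|apply NoDup_filter; auto].
    rewrite Hfar. intros [_ Hn]. exact (Hn (meet_self h Hh)).
  - intros i [<-|Hi]; auto. apply Hlt. apply Hfar in Hi; tauto.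
  - intros i j [<-|Hi] [<-|Hj] Hij; [tauto| | |].
    + apply Hfar in Hj as [_ Hm']. intros v [A B]. apply Hm'; exists v; auto.
    + apply Hfar in Hi as [_ Hm']. intros v [A B]. apply Hm'; exists v; auto.
    + apply Hfar in Hi as [Hi _]. apply Hfar in Hj as [Hj _]. apply Hdisj; auto.
  - unfold mweight. simpl.
    cut (list_sum (map (lower w h) M2) <= list_sum (map w (filter far M2)))%nat; [lia|].
    clear Hfar Hnd Hlt Hdisj. induction M2 as [|i M2 IH]; simpl; auto.
    assert (IH' : (list_sum (map (lower w h) M2) <= list_sum (map w (filter far M2)))%nat)
      by (apply IH; intros [j [Hj Hq]]; apply Hno; exists j; simpl; auto).
    unfold far at 1, lower at 1.
    destruct (excluded_middle_informative ((0 < w i)%nat /\ meet h i)) as [Hq|Hq].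
    + exfalso. apply Hno. exists i; simpl; auto.
    + destruct (excluded_middle_informative (meet h i)) as [Hm|Hm]; simpl; [|lia].
      assert (w i = 0)%nat by (destruct (w i); [auto | exfalso; apply Hq; split; [lia|auto]]). lia.
Qed.

Lemma lower_matching w h M2 : (h < n)%nat -> (0 < w h)%nat -> is_matching n H M2 ->
  exists M, is_matching n H M /\ (mweight (lower w h) M2 + 1 <= mweight w M)%nat.
Proof.
  intros Hh Hwh HM2.
  destruct (classic (exists i, In i M2 /\ (0 < w i)%nat /\ meet h i)) as [[i [HiM [Hwi Hm]]]|Hno].
  - exists M2. split; auto. apply lower_matching_hit with i; auto.
  - apply lower_matching_add; auto.
Qed.

Theorem local_ratio y : (forall i, (i < n)%nat -> 0 <= y i) -> load_bounded y ->
  forall w, exists M, is_matching n H M /\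
    rsum n (fun i => INR (w i) * y i) <= 2 * INR d * INR (mweight w M).
Proof.
  intros Hy HL w. remember (nsum n w) as s eqn:Es. revert w Es.
  induction s as [s IH] using (well_founded_induction Wf_nat.lt_wf). intros w Es.
  set (z := restrict_pos w y).
  pose proof (restrict_pos_nonneg w y Hy) as Hz. pose proof (restrict_pos_load w y Hy HL) as HLz.
  destruct (classic (exists h, (h < n)%nat /\ z h <> 0)) as [Hnz|Hall].
  - (* Lower the weights around a light edge h and recurse. *)
    destruct (light_edge_exists z Hz HLz Hnz) as [h [Hh [Hzh Hlight]]].
    assert (Hwh : (0 < w h)%nat).
    { destruct (Nat.eq_dec (w h) 0) as [E|E]; [|lia].
      unfold z, restrict_pos in Hzh. rewrite ind_false in Hzh by lia. lra. }
    assert (Hdec : (nsum n (lower w h) < s)%nat).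
    { subst s. apply nsum_lt with h; auto.
      - intros i _. apply lower_le.
      - unfold lower. destruct excluded_middle_informative as [_|Hn]; [lia|].
        exfalso. apply Hn. split; auto. apply meet_self; auto. }
    destruct (IH _ Hdec (lower w h) eq_refl) as [M2 [HM2 HM2w]].
    destruct (lower_matching w h M2 Hh Hwh HM2) as [M [HM HMw]].
    exists M; split; auto.
    rewrite (lower_split w y h). fold z.
    apply le_INR in HMw. rewrite plus_INR in HMw. simpl in HMw.
    pose proof (pos_INR d). nra.
  - exists []. split; [split; [constructor | split; intros i; simpl; tauto]|].
    rewrite restrict_pos_zero; [unfold mweight; simpl; lra|].
    intros i Hi. apply NNPP; intros Hn; apply Hall; eauto.
Qed.
End LocalRatio.

(** * A fractional cover of total mass 2d nu by LP duality *)

Section FractionalCover.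
Variables d n : nat.
Variable H : nat -> dinterval.
Variable w : nat -> nat.
Hypothesis Hd : forall i, (i < n)%nat -> is_dinterval d (H i).

Definition endpoints := nodup Req_EM_T (flat_map (fun i => map snd (H i)) (seq 0 n)).
Definition NP := length endpoints.
Definition pt j := nth j endpoints 0.

Lemma endpoint_index i b : (i < n)%nat -> In b (map snd (H i)) -> exists j, (j < NP)%nat /\ pt j = b.
Proof.
  intros Hi Hb. assert (Hin : In b endpoints).
  { apply nodup_In, in_flat_map. exists i; split; auto. apply in_seq; lia. }
  destruct (In_nth endpoints b 0 Hin) as [j [Hj E]]. exists j; split; auto.
Qed.

Lemma has_right_endpoint i : (i < n)%nat -> exists b, In b (map snd (H i)) /\ in_dint b (H i).
Proof.
  intros Hi. destruct (Hd i Hi) as [Hl [_ [Hc _]]].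
  destruct (H i) as [|I l] eqn:E; simpl in Hl; [lia|].
  assert (fst I <= snd I) by (apply Hc; simpl; auto).
  exists (snd I); split; [simpl; auto|]. exists I; split; [simpl; auto|]. unfold in_interval; lra.
Qed.

Definition emass (x : nat -> R) h := rsum NP (fun j => ind (in_dint (pt j) (H h)) * x j).

Variable nu : nat.
Hypothesis Hnu : forall M, is_matching n H M -> (mweight w M <= nu)%nat.

(* For th > 0 this is the local
   ratio theorem applied to ga / th; for th = 0 all of ga vanishes. *)
Lemma weak_duality (ga : nat -> R) th : (forall h, 0 <= ga h) -> 0 <= th ->
  (forall k, (k < NP)%nat -> rsum n (fun h => ga h * ind (in_dint (pt k) (H h))) <= th) ->
  rsum n (fun h => ga h * INR (w h)) <= th * (2 * INR d * INR nu).
Proof.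
  intros Hga Hth HL. destruct (Rle_lt_or_eq_dec 0 th Hth) as [Hpos|<-].
  - set (y := fun h => ga h / th).
    assert (Hy : forall i, (i < n)%nat -> 0 <= y i).
    { intros i _. unfold y. apply Rmult_le_pos; [auto|]. left; apply Rinv_0_lt_compat; auto. }
    assert (HLy : load_bounded n H y).
    { intros i Hi b Hb. destruct (endpoint_index i b Hi Hb) as [j [Hj <-]].
      rewrite (rsum_ext _ _ (fun k => / th * (ga k * ind (in_dint (pt j) (H k)))))
        by (intros; unfold y; field; lra).
      rewrite rsum_scal. specialize (HL j Hj).
      apply Rmult_le_reg_l with th; auto. rewrite <- Rmult_assoc, Rinv_r by lra. lra. }
    destruct (local_ratio d n H Hd y Hy HLy w) as [M [HM HMw]].
    specialize (Hnu M HM). apply le_INR in Hnu.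
    assert (E : rsum n (fun i => INR (w i) * y i) = / th * rsum n (fun h => ga h * INR (w h))).
    { rewrite <- rsum_scal. apply rsum_ext; intros; unfold y; field; lra. }
    rewrite E in HMw. apply Rmult_le_compat_l with (r := th) in HMw; [|lra].
    rewrite <- Rmult_assoc, Rinv_r, Rmult_1_l in HMw by lra.
    eapply Rle_trans; [exact HMw|]. apply Rmult_le_compat_l; [lra|].
    pose proof (pos_INR d). apply Rmult_le_compat_l; lra.
  - assert (Hz : forall h, (h < n)%nat -> ga h = 0).
    { intros h Hh. destruct (has_right_endpoint h Hh) as [b [Hb Hin]].
      destruct (endpoint_index h b Hh Hb) as [j [Hj <-]].
      assert (Hterm : ga h * ind (in_dint (pt j) (H h))
                      <= rsum n (fun h => ga h * ind (in_dint (pt j) (H h)))).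
      { apply (rsum_term n (fun h => ga h * ind (in_dint (pt j) (H h)))); auto.
        intros; apply Rmult_le_pos; [auto | apply ind_nonneg]. }
      rewrite ind_true in Hterm by auto. specialize (HL j Hj). specialize (Hga h). lra. }
    rewrite (rsum_ext _ _ (fun _ => 0)), rsum_zero by (intros h Hh; rewrite Hz by auto; ring). lra.
Qed.

(* The fractional cover LP with bound t on the total mass:
   x_j >= 0, emass x h >= w_h, sum_j x_j <= t, written as rows a.x <= b. *)
Variable t : R.
Definition row_nonneg j : row := ((fun k => if Nat.eqb k j then -1 else 0), 0).
Definition row_cover h : row := ((fun k => - ind (in_dint (pt k) (H h))), - INR (w h)).
Definition row_total : row := ((fun _ => 1), t).
Definition cover_lp := map row_nonneg (seq 0 NP) ++ map row_cover (seq 0 n) ++ [row_total].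

Lemma cover_lp_solution x : (forall r, In r cover_lp -> sat NP x r) ->
  (forall j, (j < NP)%nat -> 0 <= x j) /\ (forall h, (h < n)%nat -> INR (w h) <= emass x h) /\
  rsum NP x <= t.
Proof.
  intros Hx. unfold cover_lp in Hx. repeat split.
  - intros j Hj.
    assert (Hr := Hx (row_nonneg j) ltac:(apply in_or_app; left; apply in_map, in_seq; lia)).
    unfold sat, rdot, row_nonneg in Hr. simpl in Hr.
    rewrite (rsum_ext _ _ (fun k => if Nat.eqb k j then - x k else 0)) in Hr
      by (intros k _; destruct (Nat.eqb k j); ring).
    rewrite (rsum_unit NP j (fun k => - x k)) in Hr by auto. lra.
  - intros h Hh.
    assert (Hr := Hx (row_cover h)
                  ltac:(apply in_or_app; right; apply in_or_app; left; apply in_map, in_seq; lia)).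
    unfold sat, rdot, row_cover in Hr. simpl in Hr.
    rewrite (rsum_ext _ _ (fun k => - (ind (in_dint (pt k) (H h)) * x k))), rsum_opp in Hr
      by (intros; ring).
    unfold emass. lra.
  - assert (Hr := Hx row_total ltac:(apply in_or_app; right; apply in_or_app; right; simpl; auto)).
    unfold sat, rdot, row_total in Hr. simpl in Hr.
    rewrite (rsum_ext _ _ x) in Hr by (intros; ring). auto.
Qed.

Lemma cover_lp_cone a b : cone cover_lp (a, b) -> exists (al ga : nat -> R) th,
  (forall j, 0 <= al j) /\ (forall h, 0 <= ga h) /\ 0 <= th /\
  (forall k, a k = - al k - rsum n (fun h => ga h * ind (in_dint (pt k) (H h))) + th) /\
  b = - rsum n (fun h => ga h * INR (w h)) + th * t.
Proof.
  intros Hc. remember (a, b) as r. revert a b Heqr.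
  induction Hc as [|r a b c Hr Hc0 Hcone IH|a b a' b' Hcone IH Ea Eb];
    intros a0 b0 E; inversion E; subst; clear E.
  - exists (fun _ => 0), (fun _ => 0), 0. repeat split; try (intros; lra); try intros k;
      rewrite (rsum_ext _ _ (fun _ => 0)), rsum_zero by (intros; lra); lra.
  - destruct (IH a b eq_refl) as [al [ga [th [Hal [Hga [Hth [Ha Hb]]]]]]].
    unfold cover_lp in Hr. rewrite !in_app_iff in Hr. destruct Hr as [Hr|[Hr|[<-|[]]]].
    + apply in_map_iff in Hr as [j [<- Hj]].
      exists (fun k => al k + (if Nat.eqb k j then c else 0)), ga, th.
      repeat split; auto.
      * intros k. specialize (Hal k). destruct (Nat.eqb k j); lra.
      * intros k. simpl. rewrite Ha. destruct (Nat.eqb k j); lra.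
      * simpl. rewrite Hb. lra.
    + apply in_map_iff in Hr as [h0 [<- Hh0]]. apply in_seq in Hh0.
      exists al, (fun h => ga h + (if Nat.eqb h h0 then c else 0)), th.
      assert (Hadd : forall f : nat -> R,
                 rsum n (fun h => (ga h + (if Nat.eqb h h0 then c else 0)) * f h)
                        = rsum n (fun h => ga h * f h) + c * f h0).
      { intros f. rewrite <- (rsum_unit n h0 (fun h => c * f h)) by lia. rewrite <- rsum_plus.
        apply rsum_ext. intros h _. destruct (Nat.eqb h h0); ring. }
      repeat split; auto.
      * intros h. specialize (Hga h). destruct (Nat.eqb h h0); lra.
      * intros k. simpl. rewrite Ha, Hadd. lra.
      * simpl. rewrite Hb, Hadd. lra.
    + exists al, ga, (th + c). repeat split; auto; try lra.
      * intros k. simpl. rewrite Ha. lra.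
      * simpl. rewrite Hb. lra.
  - destruct (IH _ _ eq_refl) as [al [ga [th [Hal [Hga [Hth [Ha Hb]]]]]]].
    exists al, ga, th. repeat split; auto. intros k; rewrite <- Ea; auto.
Qed.

Hypothesis Ht : t = 2 * INR d * INR nu.

(* There is a fractional cover supported on the endpoints of total mass at
   most 2d nu: otherwise Farkas' lemma yields a dual solution violating weak
   duality. *)
Theorem fractional_cover : exists x : nat -> R, (forall j, (j < NP)%nat -> 0 <= x j) /\
  (forall h, (h < n)%nat -> INR (w h) <= emass x h) /\ rsum NP x <= t.
Proof.
  destruct (classic (exists x, forall r, In r cover_lp -> sat NP x r)) as [[x Hx]|Hn].
  - exists x. apply cover_lp_solution; auto.
  - exfalso. destruct (farkas NP cover_lp) as [a [b [Hc [Ha0 Hb0]]]]; [intros x Hx; apply Hn; eauto|].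
    destruct (cover_lp_cone a b Hc) as [al [ga [th [Hal [Hga [Hth [Ha Hb]]]]]]].
    assert (HL : forall k, (k < NP)%nat -> rsum n (fun h => ga h * ind (in_dint (pt k) (H h))) <= th).
    { intros k Hk. specialize (Ha k). rewrite Ha0 in Ha by auto. specialize (Hal k). lra. }
    pose proof (weak_duality ga th Hga Hth HL). rewrite Ht in Hb. lra.
Qed.
End FractionalCover.

(** * Rounding a fractional cover at its 1/d-quantiles *)

Lemma in_dintb_iff v h : in_dintb v h = true <-> in_dint v h.
Proof.
  unfold in_dintb, in_dint. rewrite existsb_exists.
  split; intros [I [HI Hv]]; exists I; split; auto; unfold in_intervalb, in_interval in *.
  - destruct (Rle_dec (fst I) v); [|discriminate]. destruct (Rle_dec v (snd I)); [auto|discriminate].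
  - destruct Hv. destruct (Rle_dec (fst I) v); [|tauto]. destruct (Rle_dec v (snd I)); tauto.
Qed.

Section Rounding.
Variables d n : nat.
Variable H : nat -> dinterval.
Variable w : nat -> nat.
Hypothesis Hd : forall i, (i < n)%nat -> is_dinterval d (H i).

Variable N : nat.
Variable pt : nat -> R.
Variable x : nat -> R.
Hypothesis Hx0 : forall j, (j < N)%nat -> 0 <= x j.
Hypothesis Hends : forall h b, (h < n)%nat -> In b (map snd (H h)) -> exists j, (j < N)%nat /\ pt j = b.
Hypothesis Hxc : forall h, (h < n)%nat ->
  INR (w h) <= rsum N (fun j => ind (in_dint (pt j) (H h)) * x j).

Definition cdf v := rsum N (fun j => ind (pt j <= v) * x j).
Definition cdf_lt v := rsum N (fun j => ind (pt j < v) * x j).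
Definition imass (c : interval) := rsum N (fun j => ind (in_interval (pt j) c) * x j).
Definition total := rsum N x.

Lemma cdf_le_total v : cdf v <= total.
Proof.
  unfold cdf, total. apply rsum_le. intros j Hj.
  pose proof (ind_le1 (pt j <= v)). pose proof (Hx0 j Hj). nra.
Qed.

Lemma imass_cdf a b : a <= b -> imass (a, b) = cdf b - cdf_lt a.
Proof.
  intros Hab. unfold imass, cdf, cdf_lt, Rminus. rewrite <- rsum_opp, <- rsum_plus.
  apply rsum_ext; intros j Hj. unfold in_interval; simpl.
  destruct (Rle_dec (pt j) b), (Rlt_dec (pt j) a).
  - rewrite (ind_false (a <= pt j <= b)), (ind_true (pt j <= b)), (ind_true (pt j < a)) by lra. ring.
  - rewrite (ind_true (a <= pt j <= b)), (ind_true (pt j <= b)), (ind_false (pt j < a)) by lra. ring.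
  - lra.
  - rewrite (ind_false (a <= pt j <= b)), (ind_false (pt j <= b)), (ind_false (pt j < a)) by lra. ring.
Qed.

(* Pigeonhole: one of the at most d components of h carries mass w_h / d. *)
Lemma heavy_component h : (h < n)%nat -> exists c, In c (H h) /\ INR (w h) <= INR d * imass c.
Proof.
  intros Hh. destruct (Hd h Hh) as [Hl [Hld _]].
  assert (Hsum : INR (w h) <= lsumR (H h) imass).
  { eapply Rle_trans; [apply Hxc; auto|]. unfold imass. rewrite <- lsumR_rsum.
    apply rsum_le; intros j Hj. rewrite lsumR_scal_r. apply Rmult_le_compat_r; [auto|].
    apply (ind_exists_le (H h) (fun c => in_interval (pt j) c)). }
  apply NNPP; intros Hno.
  assert (Hlt : lsumR (H h) (fun c => INR d * imass c) < INR (length (H h)) * INR (w h)).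
  { apply lsumR_lt_nonempty; [destruct (H h); simpl in Hl; [lia|congruence]|].
    intros c Hc. apply Rnot_le_lt. intros Hle. apply Hno; eauto. }
  rewrite lsumR_scal in Hlt. apply le_INR in Hld. pose proof (pos_INR (w h)). pose proof (pos_INR d).
  assert (INR (length (H h)) * INR (w h) <= INR d * INR (w h)) by (apply Rmult_le_compat_r; auto).
  assert (INR d * INR (w h) <= INR d * lsumR (H h) imass) by (apply Rmult_le_compat_l; auto). lra.
Qed.

Definition is_quantile (k j : nat) := (j < N)%nat /\ INR k <= INR d * cdf (pt j) /\
  forall j', (j' < N)%nat -> INR k <= INR d * cdf (pt j') -> pt j <= pt j'.
Definition quantile (k : nat) : R := pt (epsilon (inhabits 0%nat) (is_quantile k)).

Lemma quantile_spec k j0 : (j0 < N)%nat -> INR k <= INR d * cdf (pt j0) ->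
  INR k <= INR d * cdf (quantile k) /\ quantile k <= pt j0.
Proof.
  intros Hj0 Hk.
  destruct (epsilon_spec (inhabits 0%nat) (is_quantile k)) as [Hj [Hq Hmin]].
  { destruct (fin_argmin (fun j => INR k <= INR d * cdf (pt j)) pt N) as [j [Hj [Hq Hmin]]];
      [exists j0; auto|]. exists j; repeat split; auto. }
  unfold quantile. split; auto.
Qed.

Lemma quantile_in_interval a b k : (exists j, (j < N)%nat /\ pt j = b) ->
  INR d * cdf_lt a < INR k -> INR k <= INR d * cdf b -> a <= quantile k <= b.
Proof.
  intros [jb [Hjb <-]] Hlo Hhi. destruct (quantile_spec k jb Hjb Hhi) as [Hq Hqb].
  split; auto. apply Rnot_lt_le. intros Hqa.
  assert (cdf (quantile k) <= cdf_lt a).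
  { unfold cdf, cdf_lt. apply rsum_le; intros j Hj. apply Rmult_le_compat_r; [auto|].
    apply ind_mono. intros; lra. }
  pose proof (pos_INR d).
  assert (INR d * cdf (quantile k) <= INR d * cdf_lt a) by (apply Rmult_le_compat_l; auto).
  lra.
Qed.

Lemma component_quantiles h a b K : (h < n)%nat -> In (a, b) (H h) ->
  INR (w h) <= INR d * imass (a, b) -> (forall k, INR k <= INR d * total -> (k <= K)%nat) ->
  (w h <= length (filter (fun k => in_dintb (quantile k) (H h)) (seq 1 K)))%nat.
Proof.
  intros Hh Hc Hmass HK.
  assert (Hab : a <= b) by (destruct (Hd h Hh) as [_ [_ [Hcomp _]]]; apply (Hcomp (a, b)); auto).
  rewrite imass_cdf in Hmass by auto.
  assert (HG : 0 <= INR d * cdf_lt a).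
  { apply Rmult_le_pos; [apply pos_INR|]. apply rsum_nonneg; intros j Hj.
    apply Rmult_le_pos; [apply ind_nonneg | auto]. }
  destruct (nat_floor _ HG) as [m0 [Hm0 Hm0max]].
  assert (Hm0lt : INR d * cdf_lt a < INR m0 + 1).
  { apply Rnot_le_lt. intros Hle. assert (S m0 <= m0)%nat by (apply Hm0max; rewrite S_INR; lra). lia. }
  assert (HmK : (m0 + w h <= K)%nat).
  { apply HK. rewrite plus_INR. pose proof (cdf_le_total b). pose proof (pos_INR d).
    assert (INR d * cdf b <= INR d * total) by (apply Rmult_le_compat_l; auto). lra. }
  assert (Hmid : forall k, In k (seq (1 + m0) (w h)) -> in_dintb (quantile k) (H h) = true).
  { intros k Hk. apply in_seq in Hk. apply in_dintb_iff. exists (a, b); split; auto.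
    unfold in_interval; simpl. apply quantile_in_interval.
    - apply Hends with h; auto. change b with (snd (a, b)). apply in_map; auto.
    - assert (Hk1 : INR (S m0) <= INR k) by (apply le_INR; lia). rewrite S_INR in Hk1. lra.
    - assert (Hk2 : INR k <= INR (m0 + w h)) by (apply le_INR; lia). rewrite plus_INR in Hk2. lra. }
  replace K with (m0 + (w h + (K - (m0 + w h))))%nat by lia.
  rewrite seq_app, seq_app, !filter_app, !length_app.
  rewrite (forallb_filter_id _ (seq (1 + m0) (w h))) by (apply forallb_forall; auto).
  rewrite length_seq. lia.
Qed.

Theorem rounding : exists g S, is_w_cover n H w g S /\ INR (gtotal g S) <= INR d * total.
Proof.
  assert (HT : 0 <= INR d * total).
  { apply Rmult_le_pos; [apply pos_INR|]. apply rsum_nonneg; auto. }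
  destruct (nat_floor _ HT) as [K [HK HKmax]].
  set (Q := map quantile (seq 1 K)).
  assert (HS : NoDup (nodup Req_EM_T Q)) by apply NoDup_nodup.
  assert (HQS : incl Q (nodup Req_EM_T Q)) by (intros v Hv; apply nodup_In; auto).
  exists (count_occ Req_EM_T Q), (nodup Req_EM_T Q). split; [split; [split|]|].
  - auto.
  - intros v Hv. apply count_occ_not_In. rewrite <- nodup_In. exact Hv.
  - intros h Hh. unfold gsum_on. rewrite sum_count_occ by auto.
    unfold Q. rewrite filter_map_swap, length_map.
    destruct (heavy_component h Hh) as [[a b] [Hc Hmass]].
    apply (component_quantiles h a b K); auto.
  - unfold gtotal. rewrite <- (filter_true (nodup Req_EM_T Q)), sum_count_occ, filter_true by auto.
    unfold Q. rewrite length_map, length_seq. auto.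
Qed.
End Rounding.

Theorem corollary1p10 (d : nat) (n : nat) (H : nat -> dinterval) (w : nat -> nat) :
  (1 <= d)%nat ->
  (forall i, (i < n)%nat -> is_dinterval d (H i)) ->
  exists nu tau, is_nu_w n H w nu /\ is_tau_w n H w tau /\
    (tau <= 2 * d ^ 2 * nu)%nat.
Proof.
  intros _ Hd.
  destruct (nu_exists n H w) as [nu Hnu].
  destruct (fractional_cover d n H w Hd nu (proj2 Hnu) (2 * INR d * INR nu) eq_refl)
    as [x [Hx0 [Hxc Hxt]]].
  destruct (rounding d n H w Hd (NP n H) (pt n H) x Hx0 (endpoint_index n H) Hxc)
    as [g [S [Hcov Hg]]].
  destruct (tau_exists n H w g S Hcov) as [tau [Htau Hle]].
  exists nu, tau. split; [exact Hnu | split; [exact Htau |]].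
  enough (Hr : INR (gtotal g S) <= INR (2 * d ^ 2 * nu)) by (apply INR_le in Hr; lia).
  replace (INR (2 * d ^ 2 * nu)) with (INR d * (2 * INR d * INR nu))
    by (rewrite !mult_INR, pow_INR; simpl; ring).
  eapply Rle_trans; [exact Hg|]. apply Rmult_le_compat_l; [apply pos_INR | exact Hxt].
Qed.
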